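(* Fix a vertex $v\in\mathbb{Z}_n$. For all $M,N\in\operatorname{CM}(A)$, the restriction map $\phi_v\colon\operatorname{Hom}_A(M,N)\to\operatorname{Hom}_Z(e_vM,e_vN)$, $f\mapsto f|_{e_vM}$, is injective, and its cokernel $K_v(M,N):=\operatorname{coker}\phi_v$ is a finite-dimensional $\mathbb{C}$-vector space. Thus there is a short exact sequence $0\to\operatorname{Hom}_A(M,N)\to\operatorname{Hom}_Z(e_vM,e_vN)\to K_v(M,N)\to 0$.
   Context: Fix integers $1\le m<n$. Let $Q$ be the quiver with vertex set $\mathbb{Z}_n$ and arrows $x_a\colon a-1\to a$ and $y_a\colon a\to a-1$ for $a\in\{1,\dots,n\}$. Let $A$ be the quotient of the complete path algebra $\widehat{\mathbb{C}Q}$ by the relations $xy=yx$ and $x^m=y^{n-m}$ at every vertex; its centre is $Z=\mathbb{C}[[t]]$, $t=xy$, and $e_j$ denotes the primitive idempotent at vertex $j$. $\operatorname{CM}(A)$ is the category of finitely generated $A$-modules that are free as $Z$-modules. *)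

From HB Require Import structures.
From mathcomp Require Import all_boot all_order all_algebra.
Set Implicit Arguments. Unset Strict Implicit. Unset Printing Implicit Defensive.
Import Order.TTheory GRing.Theory Num.Theory.
Local Open Scope ring_scope.

(* Formal power series with matrix coefficients: an element of pser F r s
   is a Z-linear map Z^r -> Z^s, Z = F[[t]], in row-vector convention
   (coefficient of t^k is the k-th matrix). *)
Definition pser (F : nzRingType) (r s : nat) := nat -> 'M[F]_(r, s).

(* composition "first f then g" (Cauchy product) *)
Definition pcomp (F : nzRingType) r s p (f : pser F r s) (g : pser F s p)
  : pser F r p := fun k => \sum_(i < k.+1) f i *m g (k - i)%N.

Definition pid (F : nzRingType) r : pser F r r :=
  fun k => if k == 0%N then 1%:M else 0.

Definition pt (F : nzRingType) r : pser F r r :=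
  fun k => if k == 1%N then 1%:M else 0.

(* rectangular identity; the genuine identity when r = s, used to
   transport along a vertex equality that holds only propositionally *)
Definition pcast (F : nzRingType) r s : pser F r s :=
  fun k => if k == 0%N then \matrix_(i < r, j < s) ((i : nat) == j)%:R else 0.

Definition peq (F : nzRingType) r s (f g : pser F r s) : Prop :=
  forall k, f k = g k.

(* A representation of the quiver Q with vertices 'I_n (= Z_n):
   e_a M = Z^(rk a); xa c is the arrow x_{c+1} : c -> c+1,
   ya c is the arrow y_{c+1} : c+1 -> c. *)
Record qrep (F : nzRingType) (n : nat) := QRep {
  rk : 'I_n -> nat;
  xa : forall c : 'I_n, pser F (rk c) (rk (ordS c));
  ya : forall c : 'I_n, pser F (rk (ordS c)) (rk c)
}.

Definition vadd n (k : nat) (a : 'I_n) : 'I_n := iter k (@ordS n) a.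

Fixpoint xpath (F : nzRingType) n (M : qrep F n) (k : nat) (a : 'I_n)
  : pser F (rk M a) (rk M (vadd k a)) :=
  match k with
  | 0%N => pid F (rk M a)
  | k'.+1 => pcomp (xpath M k' a) (xa M (vadd k' a))
  end.

Fixpoint ypath (F : nzRingType) n (M : qrep F n) (k : nat) (a : 'I_n)
  : pser F (rk M (vadd k a)) (rk M a) :=
  match k with
  | 0%N => pid F (rk M a)
  | k'.+1 => pcomp (ya M (vadd k' a)) (ypath M k' a)
  end.

(* M is an object of CM(A): e_a M free of finite rank over Z = F[[t]],
   where t acts as the loop xy = yx, and x^m = y^(n-m) at every vertex. *)
Definition isCM (F : nzRingType) n (m : nat) (M : qrep F n) : Prop :=
  (forall c : 'I_n, peq (pcomp (xa M c) (ya M c)) (pt F (rk M c))) /\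
  (forall c : 'I_n, peq (pcomp (ya M c) (xa M c)) (pt F (rk M (ordS c)))) /\
  (forall b : 'I_n,
     peq (pcomp (xpath M m (vadd (n - m) b))
                (pcast F (rk M (vadd m (vadd (n - m) b))) (rk M b)))
         (ypath M (n - m) b)).

Definition isHom (F : nzRingType) n (M N : qrep F n)
  (f : forall a : 'I_n, pser F (rk M a) (rk N a)) : Prop :=
  (forall c : 'I_n, peq (pcomp (f c) (xa N c)) (pcomp (xa M c) (f (ordS c)))) /\
  (forall c : 'I_n, peq (pcomp (f (ordS c)) (ya N c)) (pcomp (ya M c) (f c))).

Arguments isHom {F n} M N f.

From Pilot Require Import Defs.
From HB Require Import structures.
From mathcomp Require Import all_boot all_order all_algebra zify.
From Stdlib Require Import FunctionalExtensionality.
Import Order.TTheory GRing.Theory Num.Theory.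
Local Open Scope ring_scope.

(* A homomorphism f : M -> N is determined by f_v: around the cycle,
   f_(a+1) y = y f_a, and y is right-cancellable because y x = t is injective
   on the free Z-module e_a N.  Conversely, for any Z-linear h at v, the maps
   g_k = t^(n-k) y^k h x^k at the vertices v + k, 0 <= k < n, commute with x
   and y along the path from v to v - 1, and the relations y^(n-1) = t^(m-1) x
   and x^n = t^(n-m) at v make them commute across the remaining edge as well.
   As g_0 = t^n h, the cokernel of the restriction to v is a quotient of
   Hom_Z(e_v M, e_v N) / t^n Hom_Z(e_v M, e_v N), which is spanned by the
   matrix units times t^k, k < n. *)

(* [ssrfun] also defines a [pcomp] (composition of partial functions). *)
Notation pcomp := Defs.pcomp.

Section PowerSeries.
Context {F : nzRingType}.

Lemma peq_eq {r s} {f g : pser F r s} : peq f g -> f = g.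
Proof. exact: functional_extensionality. Qed.

Lemma eq_peq {r s} (f g : pser F r s) : f = g -> peq f g.
Proof. by move=> ->. Qed.

Definition ptX {r} j : pser F r r := fun k => if k == j then 1%:M else 0.

Definition pshift {r s} j (f : pser F r s) : pser F r s :=
  fun k => if (j <= k)%N then f (k - j)%N else 0.

Lemma pcompE {r s p} (f : pser F r s) (g : pser F s p) k :
  pcomp f g k = \sum_(i < k.+1) f (k - i)%N *m g i.
Proof.
rewrite /pcomp (reindex_inj rev_ord_inj) /=.
by apply: eq_bigr => j _; rewrite subSS subKn // -ltnS.
Qed.

Lemma pcompA {r s p q} (f : pser F r s) (g : pser F s p) (h : pser F p q) :
  pcomp f (pcomp g h) = pcomp (pcomp f g) h.
Proof.
apply: peq_eq => i; rewrite {1}/pcomp pcompE.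
pose c j k := f j *m (g (i - j - k)%N *m h k).
transitivity (\sum_(j < i.+1) \sum_(k < i.+1 | (k <= i - j)%N) c j k).
  apply: eq_bigr => /= j _; rewrite pcompE mulmx_sumr /=.
  by rewrite (big_ord_narrow_leq (leq_subr _ _)).
rewrite (exchange_big_dep predT) //=; apply: eq_bigr => k _.
transitivity (\sum_(j < i.+1 | (j <= i - k)%N) c j k).
  apply: eq_bigl => j; rewrite -ltnS -(ltnS j) -!subSn ?leq_ord //.
  by rewrite -subn_gt0 -(subn_gt0 j) -!subnDA addnC.
rewrite (big_ord_narrow_leq (leq_subr _ _)) /pcomp mulmx_suml /=.
by apply: eq_bigr => j _; rewrite /c -!subnDA addnC mulmxA.
Qed.

Lemma pcomp_ptXl {r s} j (f : pser F r s) : pcomp (ptX j) f = pshift j f.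
Proof.
apply: peq_eq => k; rewrite /pcomp /pshift.
transitivity (\sum_(i < k.+1 | i == j :> nat) f (k - i)%N).
  rewrite [RHS]big_mkcond; apply: eq_bigr => i _ /=; rewrite /ptX.
  by case: eqP => _; rewrite ?mul1mx ?mul0mx.
by rewrite (big_ord1_eq _ (fun i => f (k - i)%N)) ltnS.
Qed.

Lemma pcomp_ptXr {r s} j (f : pser F r s) : pcomp f (ptX j) = pshift j f.
Proof.
apply: peq_eq => k; rewrite pcompE /pshift.
transitivity (\sum_(i < k.+1 | i == j :> nat) f (k - i)%N).
  rewrite [RHS]big_mkcond; apply: eq_bigr => i _ /=; rewrite /ptX.
  by case: eqP => _; rewrite ?mulmx1 ?mulmx0.
by rewrite (big_ord1_eq _ (fun i => f (k - i)%N)) ltnS.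
Qed.

Lemma pshift0 {r s} (f : pser F r s) : pshift 0 f = f.
Proof. by apply: peq_eq => k; rewrite /pshift subn0. Qed.

Lemma pcomp1l {r s} (f : pser F r s) : pcomp (pid F r) f = f.
Proof. by rewrite -[pid F r]/(ptX 0) pcomp_ptXl pshift0. Qed.

Lemma pcomp1r {r s} (f : pser F r s) : pcomp f (pid F s) = f.
Proof. by rewrite -[pid F s]/(ptX 0) pcomp_ptXr pshift0. Qed.

Lemma ptX_pshift {r} j : ptX j = pshift j (pid F r).
Proof. by rewrite -pcomp_ptXl pcomp1r. Qed.

Lemma pcomp_pshiftl {r s p} j (f : pser F r s) (g : pser F s p) :
  pcomp (pshift j f) g = pshift j (pcomp f g).
Proof. by rewrite -pcomp_ptXl -pcompA pcomp_ptXl. Qed.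

Lemma pcomp_pshiftr {r s p} j (f : pser F r s) (g : pser F s p) :
  pcomp f (pshift j g) = pshift j (pcomp f g).
Proof. by rewrite -pcomp_ptXr pcompA pcomp_ptXr. Qed.

Lemma pshiftD {r s} i j (f : pser F r s) : pshift i (pshift j f) = pshift (i + j) f.
Proof.
apply: peq_eq => k; rewrite /pshift.
case: (leqP i k) => ik; case: (leqP j (k - i)) => jk;
  case: (leqP (i + j) k) => ijk //; try lia.
by rewrite subnDA.
Qed.

Lemma pshift_inj {r s} j : injective (@pshift r s j).
Proof.
move=> f g fg; apply: peq_eq => k.
have := congr1 (fun u => u (k + j)%N) fg.
by rewrite /pshift leq_addl addnK.
Qed.

Lemma pcomp_rcancel {r s p j} {u : pser F s p} {w : pser F p s} :
  pcomp u w = pshift j (pid F s) ->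
  forall f g : pser F r s, pcomp f u = pcomp g u -> f = g.
Proof.
move=> uw f g fg; apply: (@pshift_inj _ _ j).
by rewrite -[f]pcomp1r -[g]pcomp1r -!pcomp_pshiftr -uw !pcompA fg.
Qed.

End PowerSeries.

Section Vertices.
Context {n : nat}.
Implicit Types a v : 'I_n.

Lemma vadd_val k a : (vadd k a : nat) = ((a + k) %% n)%N.
Proof.
elim: k => [|k IH]; first by rewrite addn0 modn_small.
by rewrite /= IH -addn1 modnDml addn1 addnS.
Qed.

Lemma vaddD j i a : vadd (j + i) a = vadd j (vadd i a).
Proof. by apply: val_inj; rewrite /= !vadd_val modnDml addnA (addnAC a). Qed.

Lemma vadd_n a : vadd n a = a.
Proof. by apply: val_inj; rewrite /= vadd_val modnDr modn_small. Qed.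

Definition vdist v a := ((a + n - v) %% n)%N.

Lemma vadd_vdist v a : vadd (vdist v a) v = a.
Proof.
apply: val_inj; rewrite /= vadd_val /vdist modnDmr.
have -> : (v + (a + n - v) = a + n)%N by have := ltn_ord v; lia.
by rewrite modnDr modn_small.
Qed.

Lemma vdist_lt v a : (vdist v a < n)%N.
Proof. by rewrite /vdist ltn_pmod //; have := ltn_ord v; lia. Qed.

Lemma vdist_vadd v k : (k < n)%N -> vdist v (vadd k v) = k.
Proof.
move=> kn; have := congr1 val (vadd_vdist v (vadd k v)).
rewrite /= !vadd_val => /eqP; rewrite eqn_modDl => /eqP.
by rewrite !modn_small // vdist_lt.
Qed.

Lemma ordS_vadd_pred v : ordS (vadd n.-1 v) = v.
Proof.
rewrite -[ordS _]/(vadd n.-1.+1 v) prednK ?vadd_n //.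
by have := ltn_ord v; lia.
Qed.

Lemma vdist_ordS_vadd_pred v : vdist v (ordS (vadd n.-1 v)) = 0%N.
Proof.
rewrite ordS_vadd_pred -[X in vdist _ X]/(vadd 0 v) vdist_vadd //.
by have := ltn_ord v; lia.
Qed.

End Vertices.

Section Paths.
Context {F : nzRingType} {n : nat} (M : qrep F n).
Implicit Types a b c : 'I_n.

Definition vcast a b := pcast F (rk M a) (rk M b).

Lemma vcast_id a : vcast a a = pid F _.
Proof.
apply: peq_eq => k; rewrite /vcast /pcast /pid; case: eqP => // _.
by apply/matrixP => i j; rewrite !mxE.
Qed.

Lemma vcast_trans a b c : a = b -> pcomp (vcast a b) (vcast b c) = vcast a c.
Proof. by move=> ->; rewrite vcast_id pcomp1l. Qed.

Lemma vcast_xa a b : a = b ->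
  pcomp (vcast a b) (xa M b) = pcomp (xa M a) (vcast (ordS a) (ordS b)).
Proof. by move=> ->; rewrite !vcast_id pcomp1l pcomp1r. Qed.

Lemma vcast_ypath k1 k2 a : k1 = k2 ->
  ypath M k1 a = pcomp (vcast (vadd k1 a) (vadd k2 a)) (ypath M k2 a).
Proof. by move=> ->; rewrite vcast_id pcomp1l. Qed.

Lemma ypathD j i a : ypath M (j + i) a =
  pcomp (vcast (vadd (j + i) a) (vadd j (vadd i a)))
        (pcomp (ypath M j (vadd i a)) (ypath M i a)).
Proof.
elim: j => [|j IH]; first by rewrite add0n vcast_id !pcomp1l.
rewrite addSn /= IH !pcompA; congr (pcomp _ _); rewrite -!pcompA.
by move: (vadd (j + i) a) (vaddD j i a) => b ->; rewrite !vcast_id !pcomp1l.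
Qed.

End Paths.

Section CMRelations.
Context {F : nzRingType} {n m : nat} {M : qrep F n}.
Hypothesis HM : isCM m M.

Lemma xa_ya c : pcomp (xa M c) (ya M c) = pshift 1 (pid F _).
Proof. by rewrite -ptX_pshift; apply: peq_eq; case: HM. Qed.

Lemma ya_xa c : pcomp (ya M c) (xa M c) = pshift 1 (pid F _).
Proof. by rewrite -ptX_pshift; apply: peq_eq; case: HM => _ []. Qed.

Lemma xpath_ypath k a : pcomp (xpath M k a) (ypath M k a) = pshift k (pid F _).
Proof.
elim: k => [|k IH]; first by rewrite pshift0 pcomp1l.
rewrite /= -pcompA (pcompA (xa M _)) xa_ya pcomp_pshiftl pcomp1l.
by rewrite pcomp_pshiftr IH pshiftD.
Qed.

Lemma ypath_xpath k a : pcomp (ypath M k a) (xpath M k a) = pshift k (pid F _).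
Proof.
elim: k => [|k IH]; first by rewrite pshift0 pcomp1l.
rewrite /= pcompA -(pcompA (ya M _)) IH pcomp_pshiftr pcomp1r.
by rewrite pcomp_pshiftl ya_xa pshiftD addn1.
Qed.

Hypotheses (m_gt0 : (0 < m)%N) (m_lt_n : (m < n)%N).
Variable v : 'I_n.

(* From y^(n-m) = x^m: y^(n-1) = y^(m-1) x^m = t^(m-1) x. *)
Lemma ypath_pred_n : ypath M n.-1 v =
  pshift m.-1 (pcomp (xa M (vadd n.-1 v)) (vcast M (ordS (vadd n.-1 v)) v)).
Proof.
move: m_gt0 m_lt_n HM; case: m => // m' _ m'_lt_n [_ [_ x_m_y_nm]] /=.
have e : n.-1 = (m' + (n - m'.+1))%N by lia.
set b := vadd (n - m'.+1) v.
rewrite (vcast_ypath _ _ _ v e) ypathD -(peq_eq (x_m_y_nm v)) /=.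
have ew : vadd n.-1 v = vadd m' b by rewrite e vaddD.
rewrite !pcompA (vcast_trans _ _ _ _ (congr1 (fun k => vadd k v) e)).
rewrite -(pcompA (vcast _ _ _)) ypath_xpath.
rewrite pcomp_pshiftr pcomp1r !pcomp_pshiftl; congr (pshift _ _).
by rewrite (vcast_xa _ _ _ ew) -pcompA vcast_trans // ew.
Qed.

Lemma ypath_n : ypath M n.-1.+1 v = pshift m (vcast M (ordS (vadd n.-1 v)) v).
Proof.
rewrite /= ypath_pred_n pcomp_pshiftr pcompA ya_xa pcomp_pshiftl pcomp1l.
by rewrite pshiftD addn1 prednK.
Qed.

Lemma xpath_n : xpath M n.-1.+1 v = pshift (n - m) (vcast M v (ordS (vadd n.-1 v))).
Proof.
have xy_n := xpath_ypath n.-1.+1 v.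
have e : n.-1.+1 = (m + (n - m))%N by lia.
rewrite ypath_n pcomp_pshiftr [in X in _ = X]e -pshiftD in xy_n.
move/pshift_inj: xy_n => xy_n.
rewrite -[LHS]pcomp1r -(vcast_id M) -(vcast_trans _ _ v); last exact: ordS_vadd_pred.
by rewrite pcompA xy_n pcomp_pshiftl pcomp1l.
Qed.

End CMRelations.

Section Homomorphisms.
Context {F : nzRingType} {n m : nat} {M N : qrep F n}.
Implicit Types (v : 'I_n) (f g : forall a : 'I_n, pser F (rk M a) (rk N a)).

Lemma hom_eq_of_eq_at (HN : isCM m N) {v f g} :
  isHom M N f -> isHom M N g -> f v = g v -> forall a, f a = g a.
Proof.
move=> [_ fy] [_ gy] fgv a; rewrite -(vadd_vdist v a).
elim: (vdist v a) => [//|k IH] /=.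
apply: (pcomp_rcancel (ya_xa HN (vadd k v))).
by rewrite (peq_eq (fy _)) (peq_eq (gy _)) IH.
Qed.

Section Cycle.
Variables (v : 'I_n) (g : forall k, pser F (rk M (vadd k v)) (rk N (vadd k v))).

Definition hom_of_cycle a : pser F (rk M a) (rk N a) :=
  pcomp (vcast M a (vadd (vdist v a) v))
        (pcomp (g (vdist v a)) (vcast N (vadd (vdist v a) v) a)).

Lemma hom_of_cycle_vadd {k} : (k < n)%N -> hom_of_cycle (vadd k v) = g k.
Proof. by move=> kn; rewrite /hom_of_cycle vdist_vadd // !vcast_id pcomp1l pcomp1r. Qed.

Lemma hom_of_cycle_wrap : hom_of_cycle (ordS (vadd n.-1 v)) =
  pcomp (vcast M (ordS (vadd n.-1 v)) v)
        (pcomp (g 0%N) (vcast N v (ordS (vadd n.-1 v)))).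
Proof. by rewrite /hom_of_cycle vdist_ordS_vadd_pred. Qed.

Hypotheses
  (g_xa : forall k, (k.+1 < n)%N ->
     pcomp (g k) (xa N (vadd k v)) = pcomp (xa M (vadd k v)) (g k.+1))
  (g_ya : forall k, (k.+1 < n)%N ->
     pcomp (g k.+1) (ya N (vadd k v)) = pcomp (ya M (vadd k v)) (g k))
  (wrap_xa : pcomp (g n.-1) (xa N (vadd n.-1 v)) =
     pcomp (xa M (vadd n.-1 v)) (hom_of_cycle (ordS (vadd n.-1 v))))
  (wrap_ya : pcomp (hom_of_cycle (ordS (vadd n.-1 v))) (ya N (vadd n.-1 v)) =
     pcomp (ya M (vadd n.-1 v)) (g n.-1)).

Lemma isHom_hom_of_cycle : isHom M N hom_of_cycle.
Proof.
split=> c; apply: eq_peq; rewrite -(vadd_vdist v c);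
  move: (vdist v c) (vdist_lt v c) => k kn;
  rewrite (hom_of_cycle_vadd kn); have [k1n | k1n] := ltnP k.+1 n.
- by rewrite (hom_of_cycle_vadd k1n) g_xa.
- by have /eqP -> : k == n.-1 by lia.
- by rewrite (hom_of_cycle_vadd k1n) g_ya.
- by have /eqP -> : k == n.-1 by lia.
Qed.

End Cycle.

End Homomorphisms.

Section Extension.
Context {F : nzRingType} {n m : nat} {M N : qrep F n}.
Hypotheses (HM : isCM m M) (HN : isCM m N) (m_gt0 : (0 < m)%N) (m_lt_n : (m < n)%N).
Variables (v : 'I_n) (h : pser F (rk M v) (rk N v)).

Definition lift_component k : pser F (rk M (vadd k v)) (rk N (vadd k v)) :=
  pshift (n - k) (pcomp (ypath M k v) (pcomp h (xpath N k v))).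

Lemma lift_component_xa k : (k.+1 < n)%N ->
  pcomp (lift_component k) (xa N (vadd k v)) =
  pcomp (xa M (vadd k v)) (lift_component k.+1).
Proof.
move=> k1n; rewrite /lift_component /= !pcomp_pshiftl !pcomp_pshiftr.
rewrite !pcompA (xa_ya HM) !pcomp_pshiftl pcomp1l pshiftD.
by congr pshift; lia.
Qed.

Lemma lift_component_ya k : (k.+1 < n)%N ->
  pcomp (lift_component k.+1) (ya N (vadd k v)) =
  pcomp (ya M (vadd k v)) (lift_component k).
Proof.
move=> k1n; rewrite /lift_component /= !pcomp_pshiftl !pcomp_pshiftr !pcompA.
rewrite -(pcompA _ (xa N _)) (xa_ya HN) pcomp_pshiftr pcomp1r pshiftD.
by congr pshift; lia.
Qed.

Lemma lift_component_wrap_xa :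
  pcomp (lift_component n.-1) (xa N (vadd n.-1 v)) =
  pcomp (xa M (vadd n.-1 v)) (hom_of_cycle v lift_component (ordS (vadd n.-1 v))).
Proof.
rewrite hom_of_cycle_wrap /lift_component subn0 pcomp1l pcomp1r.
rewrite (ypath_pred_n HM m_gt0 m_lt_n) !pcomp_pshiftl -!pcompA.
rewrite -/(xpath N n.-1.+1 v) (xpath_n HN m_gt0 m_lt_n).
rewrite !pcomp_pshiftr !pshiftD.
by congr pshift; lia.
Qed.

Lemma lift_component_wrap_ya :
  pcomp (hom_of_cycle v lift_component (ordS (vadd n.-1 v))) (ya N (vadd n.-1 v)) =
  pcomp (ya M (vadd n.-1 v)) (lift_component n.-1).
Proof.
apply: (pcomp_rcancel (xa_ya HN (vadd n.-1 v))).
rewrite -(pcompA (ya M _)) lift_component_wrap_xa pcompA (ya_xa HM).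
rewrite -(pcompA (hom_of_cycle _ _ _)) (ya_xa HN).
by rewrite pcomp_pshiftr pcomp_pshiftl pcomp1r pcomp1l.
Qed.

Lemma pshift_n_extends_to_hom : exists2 f, isHom M N f & f v = pshift n h.
Proof.
exists (hom_of_cycle v lift_component).
  apply: isHom_hom_of_cycle.
  - exact: lift_component_xa.
  - exact: lift_component_ya.
  - exact: lift_component_wrap_xa.
  - exact: lift_component_wrap_ya.
have n_gt0 : (0 < n)%N by lia.
rewrite [LHS](hom_of_cycle_vadd _ _ n_gt0).
by rewrite /lift_component subn0 pcomp1l pcomp1r.
Qed.

End Extension.

Section Truncation.
Context {F : nzRingType} {r s : nat}.
Implicit Types h : pser F r s.

Definition pdrop j h : pser F r s := fun k => h (k + j)%N.

Definition ptrunc j h : pser F r s := fun k => if (k < j)%N then h k else 0.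

Lemma pshift_pdrop_ptrunc j h k : h k = pshift j (pdrop j h) k + ptrunc j h k.
Proof.
by rewrite /pshift /pdrop /ptrunc; case: leqP => jk; rewrite ?subnK ?addr0 ?add0r.
Qed.

Definition pdelta {j} (p : 'I_j * ('I_r * 'I_s)) : pser F r s :=
  fun k => if k == p.1 :> nat then delta_mx p.2.1 p.2.2 else 0.

Lemma ptrunc_sum_pdelta j h k :
  ptrunc j h k = \sum_(p : 'I_j * ('I_r * 'I_s)) h p.1 p.2.1 p.2.2 *: pdelta p k.
Proof.
transitivity (\sum_(a < j) \sum_(q : 'I_r * 'I_s) h a q.1 q.2 *: pdelta (a, q) k);
  last by rewrite pair_bigA; apply: eq_bigr => -[].
rewrite /ptrunc -(@big_ord1_eq _ _ +%R (fun=> h k)) big_mkcond /=.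
apply: eq_bigr => a _; rewrite /pdelta /= eq_sym; case: ifP => [/eqP <- | _].
  by rewrite -(pair_bigA _ (fun i j => h k i j *: delta_mx i j)) -matrix_sum_delta.
by rewrite big1 // => q _; rewrite scaler0.
Qed.

Lemma ptrunc_finite_span j : exists d (G : 'I_d -> pser F r s),
  forall h, exists c : 'I_d -> F, forall k, ptrunc j h k = \sum_(i < d) c i *: G i k.
Proof.
pose T := ('I_j * ('I_r * 'I_s))%type.
exists #|{: T}|, (fun i => pdelta (enum_val i)) => h.
exists (fun i => let p : T := enum_val i in h p.1 p.2.1 p.2.2) => k.
rewrite ptrunc_sum_pdelta.
exact: (big_enum_val (fun p : T => h p.1 p.2.1 p.2.2 *: pdelta p k)).
Qed.

End Truncation.

Theorem lemma5p2 (F : numClosedFieldType) (n m : nat)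
  (hm : (1 <= m)%N) (hmn : (m < n)%N) (v : 'I_n) (M N : qrep F n)
  (HM : isCM m M) (HN : isCM m N) :
  (* phi_v is injective *)
  (forall f g : forall a : 'I_n, pser F (rk M a) (rk N a),
     isHom M N f -> isHom M N g -> peq (f v) (g v) ->
     forall a : 'I_n, peq (f a) (g a)) /\
  (* coker phi_v is a finite-dimensional F-vector space *)
  (exists (d : nat) (G : 'I_d -> pser F (rk M v) (rk N v)),
     forall h : pser F (rk M v) (rk N v),
     exists f : forall a : 'I_n, pser F (rk M a) (rk N a),
       isHom M N f /\
       exists c : 'I_d -> F,
         peq h (fun k => f v k + \sum_(i < d) c i *: G i k)).
Proof.
split.
  move=> f g Hf Hg /peq_eq fgv a.
  exact: eq_peq (hom_eq_of_eq_at HN Hf Hg fgv a).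
have [d [G span]] := ptrunc_finite_span (F := F) (r := rk M v) (s := rk N v) n.
exists d, G => h.
have [f Hf fv] := pshift_n_extends_to_hom HM HN hm hmn v (pdrop n h).
have [c hc] := span h.
exists f; split=> //; exists c => k.
by rewrite fv -hc; exact: pshift_pdrop_ptrunc.
Qed.
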